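(* Let $n$ be an even integer, $Q=P^{\alpha_2}$, $w^{ss}_{\min}\in W^Q$ the element corresponding to $(\frac n2,n)$, $\xi\in X(w^{ss}_{\min})^{ss}_T(\mathcal{L}(\frac n2\omega_2))$, and $\varphi:(G_{2,n})^{ss}_T(\mathcal{L}(\frac n2\omega_2))\to T\backslash\backslash(G_{2,n})^{ss}_T(\mathcal{L}(\frac n2\omega_2))$ the GIT quotient map. If $u,v\in W^{P^{\alpha_{n/2}}}$ satisfy $\varphi(u\xi)=\varphi(v\xi)$, then $v=u$ or $v=uw_0^{S\setminus\{\alpha_{n/2}\}}$.
   Context: $G=SL(n,\mathbb{C})$, $T$ the diagonal torus, $B$ the upper triangular Borel subgroup, $W=S_n$ acting on $G/Q$ via permutation-matrix representatives (so $\varphi(u\xi)$ is independent of the representative). $G_{2,n}=G/Q$ the Grassmannian of 2-planes in $\mathbb{C}^n$, $X(u)=\overline{BuQ}/Q$ for $u\in W^Q\cong I(2,n)$. $\mathcal{L}(m\omega_2)=\mathcal{O}(m)$ for the Plücker embedding with natural $T$-linearization; $ss$ denotes $T$-semistable points; the quotient is $\mathrm{Proj}\bigoplus_dH^0(G_{2,n},\mathcal{L}(\frac n2\omega_2)^{\otimes d})^T$. $W^{P^{\alpha_{n/2}}}=\{v\in S_n:v(1)<\cdots<v(\frac n2),\ v(\frac n2+1)<\cdots<v(n)\}$, with longest element $w_0^{S\setminus\{\alpha_{n/2}\}}$: $i\mapsto\frac n2+i$, $\frac n2+i\mapsto i$. *)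

From HB Require Import structures.
From mathcomp Require Import all_boot all_order all_algebra all_fingroup.
From mathcomp Require Import Rstruct complex.
Set Implicit Arguments.
Unset Strict Implicit.
Unset Printing Implicit Defensive.
Import Order.TTheory GRing.Theory Num.Theory.
Local Open Scope ring_scope.

Notation CC := (complex Rdefinitions.R).

(* Points of the Grassmannian G_{2,n}: a 2-plane V in C^n is represented by a
   2 x n matrix A of rank 2 whose rows span V (vectors of C^n are written as
   row vectors).  All predicates below are invariant under the left action
   of GL_2 on A, i.e. depend only on the plane.                             *)
Definition gr_point (n : nat) (A : 'M[CC]_(2, n)) : Prop := \rank A = 2%N.

(* Action of g in GL_n on the plane spanned by the rows of A: g.V = {g v}. *)
Definition gact (n : nat) (g : 'M[CC]_n) (A : 'M[CC]_(2, n)) : 'M[CC]_(2, n) :=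
  A *m g^T.

(* Action of a Weyl group element w in S_n, via the permutation matrix
   e_i |-> e_{w i}.  (perm_mx w)^T is that matrix, so w.A = A *m perm_mx w;
   equivalently the (k, w i) entry of w.A is the (k, i) entry of A. *)
Definition wact (n : nat) (w : 'S_n) (A : 'M[CC]_(2, n)) : 'M[CC]_(2, n) :=
  gact (perm_mx w)^T A.

(* Plücker coordinates p_{ij} = e_i^* /\ e_j^* (a1 /\ a2) of the plane
   spanned by the rows a1, a2 of A (all ordered pairs (i,j); p_ii = 0 and
   p_ji = - p_ij, so polynomials in these are exactly polynomials in the
   standard Plücker coordinates). *)
Definition plucker (n : nat) (A : 'M[CC]_(2, n)) (i j : 'I_n) : CC :=
  A 0 i * A 1 j - A 0 j * A 1 i.

Definition ppoly (n : nat) := seq (CC * {ffun 'I_n * 'I_n -> nat}).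

Definition ppoly_eval (n : nat) (f : ppoly n) (p : 'I_n -> 'I_n -> CC) : CC :=
  \sum_(m <- f) m.1 * \prod_(ij : 'I_n * 'I_n) p ij.1 ij.2 ^+ m.2 ij.

Definition homog (n : nat) (k : nat) (f : ppoly n) : Prop :=
  forall m, m \in f -> (\sum_(ij : 'I_n * 'I_n) m.2 ij)%N = k.

(* Value of f on the (affine cone point over the) plane A. *)
Definition pval (n : nat) (f : ppoly n) (A : 'M[CC]_(2, n)) : CC :=
  ppoly_eval f (plucker A).

(* The maximal torus T of SL(n,C): diagonal matrices with determinant 1. *)
Definition torus_elt (n : nat) (t : 'I_n -> CC) : Prop := \prod_i t i = 1.
Definition tact (n : nat) (t : 'I_n -> CC) (A : 'M[CC]_(2, n)) : 'M[CC]_(2, n) :=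
  gact (diag_mx (\row_i t i)) A.

(* The Borel subgroup B of SL(n,C): upper triangular, determinant 1. *)
Definition borel_elt (n : nat) (b : 'M[CC]_n) : Prop :=
  (forall i j : 'I_n, (j < i)%N -> b i j = 0) /\ \det b = 1.

(* A subvariety Y of G_{2,n} is a predicate on representing matrices.
   A T-invariant section of L(k omega_2) = O(k) on Y: a homogeneous form of
   degree k in the Plücker coordinates (= section of O(k) on the cone over
   Y) whose value on the cone over Y is invariant under T (with the natural
   linearization). *)
Definition Tinv_section (n : nat) (Y : 'M[CC]_(2, n) -> Prop) (k : nat)
    (f : ppoly n) : Prop :=
  homog k f /\
  forall t A, torus_elt t -> gr_point A -> Y A -> pval f (tact t A) = pval f A.

Definition whole_grass (n : nat) (A : 'M[CC]_(2, n)) : Prop := True.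

(* Y^{ss}_T(L(k omega_2)): points of Y at which some T-invariant section of
   L(k omega_2)^{d} on Y, d > 0, does not vanish. *)
Definition semistable (n : nat) (Y : 'M[CC]_(2, n) -> Prop) (k : nat)
    (A : 'M[CC]_(2, n)) : Prop :=
  gr_point A /\ Y A /\
  exists d f, (0 < d)%N /\ Tinv_section Y (d * k) f /\ pval f A != 0.

(* The GIT quotient map phi : (G_{2,n})^ss_T(L(k omega_2)) -> Proj R,
   R = \bigoplus_d H^0(G_{2,n}, L(k omega_2)^d)^T, sends x to the homogeneous
   prime of R consisting of the invariants vanishing at x.  Hence
   phi x = phi y  iff  every homogeneous T-invariant section vanishes at x
   exactly when it vanishes at y. *)
Definition same_quotient_image (n : nat) (k : nat) (A A' : 'M[CC]_(2, n)) : Prop :=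
  forall d f, Tinv_section (@whole_grass n) (d * k) f ->
    (pval f A = 0 <-> pval f A' = 0).

(* X(u) = Zariski closure of B.uQ in G_{2,n}
   (subset of P(wedge^2 C^n) via Plücker), i.e. the common zero locus in
   G_{2,n} of all homogeneous forms vanishing on the orbit B.(uQ).  Here the
   T-fixed point uQ, u in W^Q <-> (a,b) in I(2,n), is span(e_a, e_b), given by
   the matrix pt A0. *)
Definition schubert (n : nat) (A0 : 'M[CC]_(2, n)) (A : 'M[CC]_(2, n)) : Prop :=
  gr_point A /\
  forall k (f : ppoly n), homog k f ->
    (forall b, borel_elt b -> pval f (gact b A0) = 0) -> pval f A = 0.

(* The T-fixed point e_a /\ e_b (0-indexed a, b). *)
Definition fixed_pt (n a b : nat) : 'M[CC]_(2, n) :=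
  \matrix_(r < 2, j < n) (if r == 0 then (j == a :> nat)%:R else (j == b :> nat)%:R).

(* w^{ss}_min in W^Q corresponds to (n/2, n) (1-indexed), i.e. the point
   span(e_{n/2}, e_n); 0-indexed: (n/2 - 1, n - 1). *)
Definition X_wssmin (n : nat) : 'M[CC]_(2, n) -> Prop :=
  schubert (fixed_pt n (n./2).-1 n.-1).

(* W^{P^{alpha_{n/2}}}: permutations increasing on {1..n/2} and on
   {n/2+1..n} (0-indexed: on [0, n/2) and on [n/2, n)). *)
Definition in_WP_half (n : nat) (u : 'S_n) : Prop :=
  forall i j : 'I_n, (i < j)%N ->
    ((j < n./2)%N || (n./2 <= i)%N) -> (u i < u j)%N.

(* v = u * w_0^{S \ alpha_{n/2}} as permutations (v x = u (w_0 x)), where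
   w_0^{S\alpha_{n/2}} : i |-> n/2 + i, n/2 + i |-> i. *)
Definition is_times_w0half (n : nat) (u v : 'S_n) : Prop :=
  forall x y : 'I_n, (y : nat) = (x + n./2)%N -> v x = u y /\ v y = u x.

(* By the Hilbert-Mumford criterion, semistability of xi in X(w^ss_min) forces
   p_ij(xi) <> 0 whenever i <= n/2 < j, while p_ij(xi) = 0 for i, j > n/2 on
   this Schubert variety.  Let sigma = v^-1 u.  If sigma sent an element of each
   half of {1..n} into the upper half, a T-invariant monomial in which every
   index occurs exactly once would vanish at v.xi but not at u.xi.  So sigma
   preserves or exchanges the two halves, and as u and v increase on each half,
   v = u or v = u w_0^{S \ alpha_(n/2)}. *)

From Pilot Require Import Defs.
From mathcomp Require Import all_boot all_order all_algebra all_fingroup.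
From mathcomp Require Import Rstruct complex.
From mathcomp Require Import ring zify.
Set Implicit Arguments.
Unset Strict Implicit.
Unset Printing Implicit Defensive.
Import Order.TTheory GRing.Theory Num.Theory.
Local Open Scope ring_scope.

Section Plucker.
Variable n : nat.
Implicit Types (A : 'M[CC]_(2, n)) (i j a b c : 'I_n).

Lemma plucker_antisym A i j : plucker A j i = - plucker A i j.
Proof. by rewrite /plucker; ring. Qed.

Lemma plucker_tact (t : 'I_n -> CC) A i j :
  plucker (tact t A) i j = t i * t j * plucker A i j.
Proof. by rewrite /plucker /tact /Defs.gact tr_diag_mx mul_mx_diag !mxE; ring. Qed.

Lemma wactE (w : 'S_n) A k i : wact w A k i = A k ((w^-1)%g i).
Proof.
rewrite /wact /Defs.gact trmxK /perm_mx mxE (bigD1 ((w^-1)%g i)) //= big1.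
  by rewrite !mxE permKV eqxx mulr1 addr0.
by move=> j /negPf ji; rewrite !mxE -(inj_eq (@perm_inj _ w^-1)) permK ji mulr0.
Qed.

Lemma plucker_wact (w : 'S_n) A i j :
  plucker (wact w A) i j = plucker A ((w^-1)%g i) ((w^-1)%g j).
Proof. by rewrite /plucker !wactE. Qed.

Lemma plucker_exchange A a b c (k : 'I_2) :
  plucker A a b * A k c = plucker A c b * A k a + plucker A a c * A k b.
Proof.
case: k => -[|[|//]] lt_k2; rewrite /plucker.
- by rewrite (_ : Ordinal lt_k2 = 0); [ring | apply: val_inj].
- by rewrite (_ : Ordinal lt_k2 = 1); [ring | apply: val_inj].
Qed.

Lemma plucker_eq0_of_exchange A a b c k :
  A k c != 0 -> plucker A a c = 0 -> plucker A b c = 0 -> plucker A a b = 0.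
Proof.
move=> Akc_neq0 pac pbc; have := plucker_exchange A a b c k.
rewrite (plucker_antisym A b c) pac pbc oppr0 !mul0r addr0 => /eqP.
by rewrite mulf_eq0 (negPf Akc_neq0) orbF => /eqP.
Qed.

End Plucker.

Definition pmonomial n (I : finType) (S : {set I}) (g : I -> 'I_n * 'I_n) : ppoly n :=
  [:: (1, [ffun ij => #|[pred x | (x \in S) && (g x == ij)]|])].

Section Monomial.
Variables (n : nat) (I : finType) (S : {set I}) (g : I -> 'I_n * 'I_n).

Lemma pval_pmonomial A :
  Defs.pval (pmonomial S g) A = \prod_(x in S) plucker A (g x).1 (g x).2.
Proof.
rewrite /Defs.pval /ppoly_eval big_seq1 mul1r (partition_big g xpredT) //=.
apply: eq_bigr => ij _; rewrite ffunE -prodr_const.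
by apply: eq_bigr => x /andP[_ /eqP ->].
Qed.

Lemma homog_pmonomial : homog #|S| (pmonomial S g).
Proof.
move=> m; rewrite inE => /eqP -> /=.
rewrite -sum1_card (partition_big g xpredT) //=.
by apply: eq_bigr => ij _; rewrite ffunE sum1_card.
Qed.

End Monomial.

Lemma ppoly_eval_eq0 n D (f : ppoly n) (p : 'I_n -> 'I_n -> CC) :
  (0 < D)%N -> homog D f -> (forall i j, p i j = 0) -> ppoly_eval f p = 0.
Proof.
move=> D_gt0 fD p0; rewrite /ppoly_eval big_seq big1 // => m mf.
have [ij m_ij] : exists ij, (0 < m.2 ij)%N.
  apply/existsP; apply: contraTT D_gt0; rewrite negb_exists -(fD m mf) => /forallP m0.
  by rewrite big1 // => ij _; apply/eqP; rewrite -leqn0 leqNgt m0.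
by rewrite (bigD1 ij) //= p0 expr0n gtn_eqF // mul0r mulr0.
Qed.

Lemma poly_eq0_of_nonzero_roots (R : numDomainType) (p : {poly R}) :
  (forall s, s != 0 -> p.[s] = 0) -> p = 0.
Proof.
move=> p0; apply: (@roots_geq_poly_eq0 _ _ (mkseq (fun i => i.+1%:R) (size p))).
- by apply/allP => _ /mapP[i _ ->]; apply/rootP/p0; rewrite pnatr_eq0.
- by rewrite map_inj_uniq ?iota_uniq // => i j /eqP; rewrite eqr_nat eqSS => /eqP.
- by rewrite size_mkseq.
Qed.

Lemma pval_eq0_of_weight n (A : 'M[CC]_(2, n)) (f : ppoly n) D (w : 'I_n -> int) :
  (0 < D)%N -> homog D f ->
  (forall t, torus_elt t -> Defs.pval f (tact t A) = Defs.pval f A) ->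
  \sum_i w i = 0 -> (forall i j, plucker A i j != 0 -> 0 < w i + w j) ->
  Defs.pval f A = 0.
Proof.
(* Along the one-parameter subgroup s |-> diag (s ^ w i), [f] is a polynomial
   [P] in [s]; it is constant off [0] by invariance, and [P.[0] = 0] because
   every Plucker coordinate of the limit point vanishes. *)
move=> D_gt0 fD f_inv w0 w_pos.
pose e i j := absz (w i + w j).
pose q (s : CC) i j := plucker A i j * s ^+ e i j.
pose P : {poly CC} := \sum_(m <- f) m.1%:P *
  \prod_(ij : 'I_n * 'I_n) (plucker A ij.1 ij.2 *: 'X^(e ij.1 ij.2)) ^+ m.2 ij.
have hornerP s : P.[s] = ppoly_eval f (q s).
  rewrite horner_sum; apply: eq_bigr => m _; rewrite hornerM hornerC horner_prod.
  by congr (_ * _); apply: eq_bigr => ij _; rewrite horner_exp hornerZ hornerXn.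
have P_off0 s : s != 0 -> P.[s] = Defs.pval f A.
  move=> s_neq0; have s_unit : s \is a GRing.unit by rewrite unitfE.
  rewrite hornerP -(f_inv (fun i => s ^ w i)); last first.
    by rewrite /torus_elt -(big_morph _ (exprzDr s_unit) (expr0z s)) w0 expr0z.
  rewrite /Defs.pval /ppoly_eval; apply: eq_bigr => m _; congr (_ * _).
  apply: eq_bigr => ij _; rewrite plucker_tact /q; congr (_ ^+ _).
  have [->|pl_neq0] := eqVneq (plucker A ij.1 ij.2) 0; first by rewrite mulr0 mul0r.
  by rewrite -exprzDr // mulrC /e -(gez0_abs (ltW (w_pos _ _ pl_neq0))).
have P0 : P.[0] = 0.
  rewrite hornerP; apply: (ppoly_eval_eq0 D_gt0 fD) => i j; rewrite /q.
  have [->|/w_pos w_ij] := eqVneq (plucker A i j) 0; first by rewrite mul0r.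
  by rewrite expr0n /e absz_eq0 gt_eqF // mulr0.
have : P - (Defs.pval f A)%:P = 0.
  by apply: poly_eq0_of_nonzero_roots => s /P_off0; rewrite !hornerE => ->; rewrite subrr.
by move/(congr1 (horner^~ 0)); rewrite !hornerE P0 sub0r => /eqP; rewrite oppr_eq0 => /eqP.
Qed.

Section Instability.
Variables (n D : nat) (A : 'M[CC]_(2, n)) (f : ppoly n).
Hypotheses (D_gt0 : (0 < D)%N) (fD : homog D f)
  (f_inv : forall t, torus_elt t -> Defs.pval f (tact t A) = Defs.pval f A).

Lemma pval_eq0_of_col0 (c : 'I_n) : (forall k, A k c = 0) -> Defs.pval f A = 0.
Proof.
move=> col0; pose w i : int := if i == c then 1 - n%:Z else 1.
apply: (pval_eq0_of_weight D_gt0 fD f_inv (w := w)).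
  rewrite (bigD1 c) //= (eq_bigr (fun=> 1)); last by move=> i /negPf; rewrite /w => ->.
  rewrite sumr_const /w eqxx cardC1 card_ord natz.
  by have := ltn_ord c; lia.
move=> i j; rewrite /w.
have plucker_c k : plucker A k c = 0 by rewrite /plucker !col0 mulr0 mul0r subrr.
have [-> | _] := eqVneq i c; first by rewrite plucker_antisym plucker_c oppr0 eqxx.
by have [-> | _] := eqVneq j c; first by rewrite plucker_c eqxx.
Qed.

Lemma pval_eq0_of_plucker_cover (S : {set 'I_n}) :
  (2 * #|S| < n)%N -> (forall i j, plucker A i j != 0 -> (i \in S) || (j \in S)) ->
  Defs.pval f A = 0.
Proof.
move=> S_small S_cover.
pose w i : int := if i \in S then #|~: S|%:Z else - #|S|%:Z.
have cardSC : #|~: S| = (n - #|S|)%N by rewrite cardsCs setCK card_ord.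
apply: (pval_eq0_of_weight D_gt0 fD f_inv (w := w)).
  rewrite (bigID (mem S)) /= (eq_bigr (fun=> #|~: S|%:Z)) => [|i iS]; last by rewrite /w iS.
  rewrite [X in _ + X](eq_bigr (fun=> - #|S|%:Z)) => [|i /negPf iS]; last by rewrite /w iS.
  rewrite !sumr_const [X in - _ *+ X](eq_card (B := ~: S)) => [|i]; last by rewrite !inE.
  by rewrite mulNrn !pmulrn !mulrzz mulrC subrr.
(* [lia] sees the differently elaborated copies of [#|S|] as distinct atoms. *)
move=> i j /S_cover; rewrite /w cardSC; move: S_small; set k := #|S| => S_small.
case: (i \in S); case: (j \in S) => //= _.
- by rewrite -PoszD ltz_nat; lia.
- by rewrite subr_gt0 ltz_nat; lia.
- by rewrite addrC subr_gt0 ltz_nat; lia.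
Qed.

End Instability.

Definition below (n h : nat) : {set 'I_n} := [set i : 'I_n | (i < h)%N].

Lemma mem_below n h (i : 'I_n) : (i \in below n h) = (i < h)%N.
Proof. by rewrite inE. Qed.

Lemma card_below n h : (h <= n)%N -> #|below n h| = h.
Proof.
move=> le_hn; have widen_inj : injective (widen_ord le_hn).
  by move=> i j [] /val_inj.
rewrite -[RHS](card_ord h) -(card_imset _ widen_inj).
apply: eq_card => i; rewrite mem_below; apply/idP/imsetP => [lt_ih|[j _ ->] //=].
by exists (Ordinal lt_ih) => //; apply: val_inj.
Qed.

Lemma schubert_plucker_eq0 n a b (A : 'M[CC]_(2, n)) (i j : 'I_n) :
  schubert (fixed_pt n a b) A -> (a < i)%N -> (a < j)%N -> plucker A i j = 0.
Proof.
move=> [_ vanish] lt_ai lt_aj.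
have := vanish _ _ (homog_pmonomial (S := [set tt]) (g := fun=> (i, j))).
rewrite !pval_pmonomial !big_set1; apply=> B [B_upper _].
rewrite pval_pmonomial big_set1 /=.
have row0 (l : 'I_n) : (a < l)%N -> Defs.gact B (fixed_pt n a b) 0 l = 0.
  move=> lt_al; rewrite mxE; apply: big1 => m _; rewrite !mxE /=.
  by have [eq_ma|] := eqVneq (m : nat) a; rewrite ?mul0r // B_upper ?mulr0 ?eq_ma.
by rewrite /plucker !row0 // !mul0r subr0.
Qed.

Lemma X_wssmin_plucker_neq0 n (xi : 'M[CC]_(2, n)) (i0 j0 : 'I_n) :
  (0 < n./2)%N -> semistable (@X_wssmin n) n./2 xi ->
  (i0 < n./2)%N -> (n./2 <= j0)%N -> plucker xi i0 j0 != 0.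
Proof.
move=> h_gt0 [xi_gr [Xxi [d [f [d_gt0 [[fD f_inv] f_neq0]]]]]] lt_i0h le_hj0.
apply: contra f_neq0 => /eqP p0; apply/eqP.
have xi_inv t : torus_elt t -> Defs.pval f (tact t xi) = Defs.pval f xi.
  by move=> t_T; apply: f_inv.
have D_gt0 : (0 < d * n./2)%N by rewrite muln_gt0 d_gt0.
have upper0 (i j : 'I_n) : (n./2 <= i)%N -> (n./2 <= j)%N -> plucker xi i j = 0.
  by move=> le_hi le_hj; apply: (schubert_plucker_eq0 Xxi); lia.
(* Either [xi] lies in the hyperplane x_j0 = 0, or the Plucker relations through
   [j0] kill every p_ab with a, b in the upper half or equal to [i0]. *)
have [col0 | /existsP[k xi_kj0]] := boolP [forall k, xi k j0 == 0].
  by apply: (pval_eq0_of_col0 D_gt0 fD xi_inv (c := j0)) => k; apply/eqP; move/forallP: col0.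
apply: (pval_eq0_of_plucker_cover D_gt0 fD xi_inv (S := below n n./2 :\ i0)).
  have := cardsD1 i0 (below n n./2).
  rewrite mem_below lt_i0h card_below /=; last lia.
  by set m := #|_ :\ i0|; lia.
move=> i j; apply: contraR; rewrite negb_or !in_setD1 !mem_below.
rewrite !negb_and !negbK -!leqNgt => /andP[i_out j_out].
have out0 x : (x == i0) || (n./2 <= x)%N -> plucker xi x j0 = 0.
  by case/orP => [/eqP -> // | /upper0]; apply.
by apply/eqP; apply: (plucker_eq0_of_exchange xi_kj0); apply: out0.
Qed.

Section IncreasingPermutations.
Variable n : nat.
Implicit Types (s u v : 'S_n) (P : {set 'I_n}).

Lemma incr_perm_on_id s P :
  {homo s : i / i \in P} -> {in P &, {homo s : i j / (i < j)%N}} -> {in P, s =1 id}.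
Proof.
move=> sP s_incr; pose lt := relpre (@nat_of_ord n) ltn.
have lt_trans : transitive lt by move=> j i k; apply: ltn_trans.
have sorted_enumP : sorted lt (enum P).
  rewrite /enum_mem -enumT sorted_filter // -sorted_map val_enum_ord.
  exact: iota_ltn_sorted.
have sorted_sP : sorted lt (map s (enum P)).
  by apply: (homo_sorted_in s_incr) => //; apply/allP => i; rewrite mem_enum.
have [_ same_mem] : (size (map s (enum P)) = size (enum P)) * (map s (enum P) =i enum P).
  apply: uniq_min_size; rewrite ?size_map //.
    by rewrite map_inj_uniq ?enum_uniq //; apply: perm_inj.
  by move=> _ /mapP[i iP ->]; rewrite mem_enum in iP; rewrite mem_enum; apply: sP.
have sE : map s (enum P) = enum P.
  by apply: (irr_sorted_eq lt_trans _ sorted_sP sorted_enumP same_mem) => i; apply: ltnn.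
move=> i iP; have ie : i \in enum P by rewrite mem_enum.
by rewrite -{1}(nth_index i ie) -(nth_map i i) ?index_mem // sE nth_index.
Qed.

Lemma eq_in_incr_perm u v P :
  {in P &, {homo u : i j / (i < j)%N}} -> {in P &, {homo v : i j / (i < j)%N}} ->
  {homo (u * v^-1)%g : i / i \in P} -> {in P, u =1 v}.
Proof.
move=> u_incr v_incr stable.
have v_mono : {in P &, {mono v : i j / (i < j)%N}}.
  exact: (@leW_mono_in _ _ 'I_n 'I_n P v (@le_mono_in _ _ 'I_n 'I_n P v v_incr)).
have : {in P, (u * v^-1)%g =1 id}.
  apply: incr_perm_on_id => // i j iP jP lt_ij.
  by rewrite -v_mono ?stable // !permM !permKV; apply: u_incr.
by move=> fixP i iP; rewrite -{2}(fixP i iP : _ = i) permM permKV.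
Qed.

Lemma perm_stable_setC s P : {homo s : i / i \in P} -> {homo s : i / i \in ~: P}.
Proof.
move=> sP i; rewrite !inE; apply: contra => siP.
have sPE : s @: P = P.
  apply/eqP; rewrite eqEcard card_imset ?leqnn ?andbT; last exact: perm_inj.
  by apply/subsetP => _ /imsetP[j jP ->]; apply: sP.
by move: siP; rewrite -{1}sPE => /imsetP[j jP /perm_inj ->].
Qed.

Lemma eq_incr_on_halves_perm u v P :
  {in P &, {homo u : i j / (i < j)%N}} -> {in ~: P &, {homo u : i j / (i < j)%N}} ->
  {in P &, {homo v : i j / (i < j)%N}} -> {in ~: P &, {homo v : i j / (i < j)%N}} ->
  {homo (u * v^-1)%g : i / i \in P} -> u = v.
Proof.
move=> uP uPC vP vPC stable; apply/permP => i.
have [iP | iPC] := boolP (i \in P); first exact: (eq_in_incr_perm uP vP stable).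
by apply: (eq_in_incr_perm uPC vPC (perm_stable_setC stable)); rewrite inE.
Qed.

End IncreasingPermutations.

Lemma in_WP_half_incr n (u : 'S_n) : in_WP_half u ->
  {in below n n./2 &, {homo u : i j / (i < j)%N}} /\
  {in ~: below n n./2 &, {homo u : i j / (i < j)%N}}.
Proof.
move=> u_WP; split=> i j; rewrite ?inE -?leqNgt => iL jL lt_ij; apply: u_WP => //.
  by rewrite jL.
by rewrite iL orbT.
Qed.

Section HalfSwap.
Variables (n h : nat).
Hypothesis nE : n = (h + h)%N.

Definition half_swap_fun (i : 'I_n) : 'I_n :=
  insubd i (if (i < h)%N then i + h else i - h)%N.

Lemma val_half_swap_fun i :
  val (half_swap_fun i) = if (i < h)%N then (i + h)%N else (i - h)%N.
Proof.
by rewrite val_insubd ifT //; have := ltn_ord i; case: (ltnP i h); lia.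
Qed.

Lemma half_swap_funK : involutive half_swap_fun.
Proof.
move=> i; apply: val_inj; rewrite !val_half_swap_fun.
by have := ltn_ord i; case: (ltnP i h) => /=; case: ifP; lia.
Qed.

Definition half_swap : 'S_n := perm (inv_inj half_swap_funK).

Lemma half_swapE i :
  val (half_swap i) = if (i < h)%N then (i + h)%N else (i - h)%N.
Proof. by rewrite permE val_half_swap_fun. Qed.

Lemma mem_half_swap_below i : (half_swap i \in below n h) = (i \notin below n h).
Proof.
rewrite !mem_below half_swapE -leqNgt; have := ltn_ord i.
by case: (ltnP i h) => ? ?; apply/idP/idP; lia.
Qed.

Lemma half_swap_ltn (i j : 'I_n) :
  (i < h)%N = (j < h)%N -> (half_swap i < half_swap j)%N = (i < j)%N.
Proof.
rewrite !half_swapE; case: (ltnP i h); case: (ltnP j h) => // *.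
all: by apply/idP/idP; lia.
Qed.

Lemma half_swap_mul_incr (u : 'S_n) :
  {in below n h &, {homo u : i j / (i < j)%N}} ->
  {in ~: below n h &, {homo u : i j / (i < j)%N}} ->
  {in below n h &, {homo (half_swap * u)%g : i j / (i < j)%N}} /\
  {in ~: below n h &, {homo (half_swap * u)%g : i j / (i < j)%N}}.
Proof.
move=> uL uU; split=> i j iP jP lt_ij; rewrite !permM.
  apply: uU; rewrite ?in_setC ?mem_half_swap_below ?negbK ?half_swap_ltn //.
  by rewrite -!mem_below iP jP.
move: iP jP; rewrite !in_setC => iP jP.
apply: uL; rewrite ?mem_half_swap_below ?half_swap_ltn //.
by rewrite -!mem_below (negPf iP) (negPf jP).
Qed.

End HalfSwap.

Lemma Tinv_matching_monomial n (L : {set 'I_n}) (p r : 'S_n) :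
  {homo r : i / i \in L >-> i \notin L} -> {homo r : i / i \notin L >-> i \in L} ->
  Tinv_section (@whole_grass n) #|L| (pmonomial L (fun i => (p i, p (r i)))).
Proof.
move=> rL rLC; split; first exact: homog_pmonomial.
move=> t A t_T _ _; rewrite !pval_pmonomial.
rewrite (eq_bigr _ (fun i _ => plucker_tact t A _ _)) big_split /= big_split /=.
have rLE : r @: L = ~: L.
  apply/setP => i; rewrite inE; apply/imsetP/idP => [[j jL ->] | iLC].
    exact: rL.
  exists ((r^-1)%g i); last by rewrite permKV.
  by apply: contraR iLC => /rLC; rewrite permKV.
rewrite -(@big_imset _ _ _ _ _ r L (fun j => t (p j))) /=; last first.
  by move=> i j _ _; apply: perm_inj.
have split_L : \prod_i t (p i) = \prod_(i in L) t (p i) * \prod_(i in ~: L) t (p i).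
  by rewrite (bigID (mem L)) /=; congr (_ * _); apply: eq_bigl => i; rewrite inE.
rewrite rLE -split_L -(reindex_inj (@perm_inj _ p) (P := xpredT)) /=.
by rewrite t_T mul1r.
Qed.

Lemma same_quotient_image_perm_halves n h (xi : 'M[CC]_(2, n)) (u v : 'S_n) :
  n = (h + h)%N ->
  (forall i j : 'I_n, (i < h)%N -> (h <= j)%N -> plucker xi i j != 0) ->
  (forall i j : 'I_n, (h <= i)%N -> (h <= j)%N -> plucker xi i j = 0) ->
  same_quotient_image h (wact u xi) (wact v xi) ->
  {homo (u * v^-1)%g : i / i \in below n h} \/
  {homo (u * v^-1)%g : i / i \notin below n h >-> i \in below n h}.
Proof.
move=> nE lower_neq0 upper_eq0 same_phi.
set L := below n h; set sigma := (u * v^-1)%g.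
have [stable | /forallPn[b]] := boolP [forall i, (i \in L) ==> (sigma i \in L)].
  by left=> i; move/forallP/(_ i)/implyP: stable.
have [swap | /forallPn[a]] := boolP [forall i, (i \notin L) ==> (sigma i \in L)].
  by right=> i; move/forallP/(_ i)/implyP: swap.
(* Otherwise the matching monomial prod_(i < h) X_(u i, u (rho i)), with [rho]
   exchanging the halves and sending [b] to [a], separates u.xi from v.xi. *)
rewrite !negb_imply => /andP[aU sigma_aU] /andP[bL sigma_bU]; exfalso.
pose sw := half_swap nE; pose rho := (sw * tperm (sw b) a)%g.
have swbU : sw b \notin L by rewrite mem_half_swap_below bL.
have rhoL : {homo rho : i / i \in L >-> i \notin L}.
  move=> i iL; rewrite permM.
  by case: tpermP => [_|_|_ _] //; rewrite mem_half_swap_below negbK.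
have rhoLC : {homo rho : i / i \notin L >-> i \in L}.
  move=> i iU; rewrite permM tpermD ?mem_half_swap_below //.
    by apply: contraNneq swbU => ->; rewrite mem_half_swap_below.
  by apply: contraNneq aU => ->; rewrite mem_half_swap_below.
pose F := pmonomial L (fun i => (u i, u (rho i))).
have F_u_neq0 : Defs.pval F (wact u xi) != 0.
  rewrite pval_pmonomial; apply/prodf_neq0 => i iL; rewrite plucker_wact !permK.
  by apply: lower_neq0; [rewrite -mem_below | rewrite leqNgt -mem_below rhoL].
have F_v_eq0 : Defs.pval F (wact v xi) = 0.
  rewrite pval_pmonomial (bigD1 b) //= plucker_wact permM tpermL -!permM.
  by rewrite upper_eq0 ?mul0r // leqNgt -mem_below.
have := Tinv_matching_monomial u rhoL rhoLC.
rewrite card_below ?nE ?leq_addr // -[h]mul1n => /same_phi[_ /(_ F_v_eq0)].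
by apply/eqP.
Qed.

Theorem lemma7p9 (n : nat) (Hn_even : ~~ odd n) (Hn_pos : (0 < n)%N)
    (xi : 'M[CC]_(2, n))
    (Hxi : semistable (@X_wssmin n) n./2 xi)
    (u v : 'S_n) (Hu : in_WP_half u) (Hv : in_WP_half v)
    (Huss : semistable (@whole_grass n) n./2 (wact u xi))
    (Hvss : semistable (@whole_grass n) n./2 (wact v xi))
    (Hphi : same_quotient_image n./2 (wact u xi) (wact v xi)) :
  v = u \/ is_times_w0half u v.
Proof.
have [nE h_gt0] : n = (n./2 + n./2)%N /\ (0 < n./2)%N by lia.
have lower_neq0 i j := X_wssmin_plucker_neq0 (i0 := i) (j0 := j) h_gt0 Hxi.
have upper_eq0 (i j : 'I_n) : (n./2 <= i)%N -> (n./2 <= j)%N -> plucker xi i j = 0.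
  by move=> le_hi le_hj; apply: (schubert_plucker_eq0 Hxi.2.1); lia.
have [uL uU] := in_WP_half_incr Hu; have [vL vU] := in_WP_half_incr Hv.
have [stable | swap] := same_quotient_image_perm_halves nE lower_neq0 upper_eq0 Hphi.
  by left; symmetry; apply: (eq_incr_on_halves_perm uL uU vL vU stable).
right; pose sw := half_swap nE.
have swuE : (sw * u)%g = v.
  have [swuL swuU] := half_swap_mul_incr nE uL uU.
  apply: (eq_incr_on_halves_perm swuL swuU vL vU) => i iL.
  by rewrite -mulgA permM swap // mem_half_swap_below iL.
move=> x y xy; rewrite -swuE !permM.
have := ltn_ord y; rewrite xy => lt_xh_n.
have sw_x : sw x = y by apply: val_inj; rewrite half_swapE /= xy; case: ifP; lia.
have sw_y : sw y = x by apply: val_inj; rewrite half_swapE /= xy; case: ifP; lia.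
by rewrite sw_x sw_y.
Qed.
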